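(* Let $G$ be a locally finite discrete group and $1<p<\infty$, and suppose the set $B_1=\{f\in\ell^1(G):\|f\|_{A_p(G)}\le 1\}$ is bounded in the $\ell^1$-norm. Then $G$ is finite.
   Context: A group is locally finite if every finitely generated subgroup is finite. For a discrete group $G$ and $1<p<\infty$, $\frac1p+\frac1q=1$, $A_p(G)$ is the space of functions $u=\sum_{i=1}^\infty g_i*f_i^{\vee}$ with $f_i\in \ell_p(G)$, $g_i\in \ell_q(G)$, $\sum_i\|f_i\|_p\|g_i\|_q<\infty$, where $f^{\vee}(x)=f(x^{-1})$, normed by $\|u\|_{A_p(G)}=\inf\{\sum_i\|f_i\|_p\|g_i\|_q\}$ over all such representations; $\ell^1(G)\subseteq A_p(G)$. *)

From HB Require Import structures.
From mathcomp Require Import all_boot all_order all_algebra.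
From mathcomp Require Import all_classical all_reals.
From mathcomp Require Import exp.
From mathcomp Require Import complex.
From Stdlib Require Import List.
Set Implicit Arguments. Unset Strict Implicit. Unset Printing Implicit Defensive.
Import Order.TTheory GRing.Theory Num.Theory.
Local Open Scope ring_scope.
Local Open Scope classical_set_scope.

Definition is_group (G : Type) (mul : G -> G -> G) (one : G) (inv : G -> G) : Prop :=
  [/\ (forall x y z, mul x (mul y z) = mul (mul x y) z),
      (forall x, mul one x = x), (forall x, mul x one = x),
      (forall x, mul (inv x) x = one) & (forall x, mul x (inv x) = one)].

Inductive gen_subgroup (G : Type) (mul : G -> G -> G) (one : G) (inv : G -> G)
    (s : list G) : G -> Prop :=
  | gen_base x : List.In x s -> gen_subgroup mul one inv s x
  | gen_one : gen_subgroup mul one inv s one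
  | gen_mul x y : gen_subgroup mul one inv s x -> gen_subgroup mul one inv s y ->
                  gen_subgroup mul one inv s (mul x y)
  | gen_inv x : gen_subgroup mul one inv s x -> gen_subgroup mul one inv s (inv x).

Definition finite_pred (G : Type) (P : G -> Prop) : Prop :=
  exists l : list G, forall x, P x -> List.In x l.

Definition locally_finite (G : Type) (mul : G -> G -> G) (one : G) (inv : G -> G) : Prop :=
  forall s : list G, finite_pred (gen_subgroup mul one inv s).

Section Sums.
Variable R : realType.
Local Notation C := R[i].

Definition fin_psums (T : Type) (a : T -> R) : set R :=
  [set s | exists F : list T, List.NoDup F /\ s = \sum_(x <- F) a x].

Definition summable (T : Type) (a : T -> R) : Prop := has_ubound (fin_psums a).
Definition psum (T : Type) (a : T -> R) : R := sup (fin_psums a).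

(* Unconditional sum of a complex family over an arbitrary index type. *)
Definition has_sumC (T : Type) (a : T -> C) (s : C) : Prop :=
  forall e : R, 0 < e -> exists F0 : list T, forall F : list T, List.NoDup F ->
    (forall x, List.In x F0 -> List.In x F) ->
    Normc.normc (\sum_(x <- F) a x - s) < e.

Definition series_toC (c : nat -> C) (s : C) : Prop :=
  forall e : R, 0 < e -> exists N : nat, forall n : nat, (N <= n)%N ->
    Normc.normc (\sum_(i < n) c i - s) < e.

Definition in_lp (G : Type) (p : R) (f : G -> C) : Prop :=
  summable (fun x => Normc.normc (f x) `^ p).
Definition lp_norm (G : Type) (p : R) (f : G -> C) : R :=
  (psum (fun x => Normc.normc (f x) `^ p)) `^ p^-1.

Definition in_l1 (G : Type) (f : G -> C) : Prop := summable (fun x => Normc.normc (f x)).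
Definition l1_norm (G : Type) (f : G -> C) : R := psum (fun x => Normc.normc (f x)).

Definition conj_exp (p : R) : R := p / (p - 1).

Definition check (G : Type) (inv : G -> G) (f : G -> C) : G -> C := fun x => f (inv x).

Definition conv_at (G : Type) (mul : G -> G -> G) (inv : G -> G)
    (a b : G -> C) (x : G) (v : C) : Prop :=
  has_sumC (fun y => a y * b (mul (inv y) x)) v.

Definition Ap_rep (G : Type) (mul : G -> G -> G) (inv : G -> G) (p : R)
    (u : G -> C) (f g : nat -> G -> C) : Prop :=
  [/\ (forall i, in_lp p (f i)), (forall i, in_lp (conj_exp p) (g i)),
      summable (fun i => lp_norm p (f i) * lp_norm (conj_exp p) (g i)) &
      exists c : nat -> G -> C,
        (forall i x, conv_at mul inv (g i) (check inv (f i)) x (c i x)) /\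
        (forall x, series_toC (fun i => c i x) (u x))].

Definition Ap_norm (G : Type) (mul : G -> G -> G) (inv : G -> G) (p : R)
    (u : G -> C) : R :=
  inf [set r : R | exists f g : nat -> G -> C, Ap_rep mul inv p u f g /\
        r = psum (fun i => lp_norm p (f i) * lp_norm (conj_exp p) (g i))].

End Sums.

From HB Require Import structures.
From mathcomp Require Import all_boot all_order all_algebra.
From mathcomp Require Import all_classical all_reals.
From mathcomp Require Import exp.
From mathcomp Require Import complex.
From Stdlib Require Import List Permutation.
Import Order.TTheory GRing.Theory Num.Theory.
Local Open Scope ring_scope.
Set Implicit Arguments. Unset Strict Implicit.

(* If H is a finite subgroup of order n, then 1_H = (n^-1 1_H) * 1_H^vee, so
   ||1_H||_{A_p} <= ||1_H||_p ||n^-1 1_H||_q = n^(1/p) n^(1/q) n^-1 = 1, whereas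
   ||1_H||_1 = n.  An l^1 bound M on the unit ball of A_p therefore bounds the
   order of every finite subgroup by M.  In an infinite locally finite group the
   subgroup generated by M + 1 distinct elements is finite of order > M. *)

Section ListSums.
Variables (V : nmodType) (T : Type).

Lemma big_Permutation (a : T -> V) (F F' : list T) : Permutation F F' ->
  \sum_(x <- F) a x = \sum_(x <- F') a x.
Proof.
elim=> [|x l l' _ IH|x y l|l l' l'' _ IH1 _ IH2]; rewrite ?big_cons ?IH ?IH1 //.
exact: addrCA.
Qed.

Lemma big_List_filterID (a : T -> V) (P : pred T) (F : list T) :
  \sum_(x <- F) a x =
    \sum_(x <- List.filter P F) a x + \sum_(x <- List.filter (predC P) F) a x.
Proof. by rewrite (bigID P) /= !big_filter. Qed.

Lemma big1_In (a : T -> V) (F : list T) :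
  (forall x, In x F -> a x = 0) -> \sum_(x <- F) a x = 0.
Proof.
elim: F => [|x F IH] a0; first by rewrite big_nil.
by rewrite big_cons a0 ?IH ?add0r //=; [move=> y Fy; apply: a0; right | left].
Qed.

Lemma big_const_In (a : T -> V) (c : V) (F : list T) :
  (forall x, In x F -> a x = c) -> \sum_(x <- F) a x = c *+ length F.
Proof.
elim: F => [|x F IH] ac; first by rewrite big_nil.
by rewrite big_cons ac ?IH ?mulrS //=; [move=> y Fy; apply: ac; right | left].
Qed.

Lemma In_filter_asbool (P : T -> Prop) (F : list T) x :
  In x (List.filter (fun y => `[< P y >]) F) <-> In x F /\ P x.
Proof. by rewrite filter_In; split=> -[Fx /asboolP]. Qed.

Lemma big_NoDup_sub (a : T -> V) (F L : list T) : NoDup F -> NoDup L ->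
  incl L F -> (forall x, In x F -> ~ In x L -> a x = 0) ->
  \sum_(x <- F) a x = \sum_(x <- L) a x.
Proof.
move=> nF nL LF a0; rewrite (big_List_filterID a (fun x => `[< In x L >])).
rewrite [X in _ + X]big1_In ?addr0; last first.
  by move=> x /filter_In[Fx /asboolPn]; apply: a0.
apply: big_Permutation; apply: NoDup_Permutation => [||x]; first exact: NoDup_filter.
  by [].
by rewrite In_filter_asbool; split=> [[]//|Lx]; split; [apply: LF|].
Qed.

End ListSums.

Lemma ler_big_NoDup_incl (R : numDomainType) (T : Type) (a : T -> R) (F L : list T) :
  NoDup F -> NoDup L -> incl F L -> (forall x, 0 <= a x) ->
  \sum_(x <- F) a x <= \sum_(x <- L) a x.
Proof.
move=> nF nL FL a0; rewrite (big_List_filterID a (fun x => `[< In x F >]) L).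
rewrite -(@big_Permutation _ _ a F); first by rewrite lerDl sumr_ge0.
apply: NoDup_Permutation => [//||x]; first exact: NoDup_filter.
by rewrite In_filter_asbool; split=> [Fx|[]//]; split; [apply: FL|].
Qed.

Section FinitelySupportedSums.
Variables (R : realType) (T : Type).

Lemma psum_ge0 (a : T -> R) : summable a -> 0 <= psum a.
Proof.
have F0 : fin_psums a 0 by exists nil; rewrite big_nil; split=> //; constructor.
by move=> sa; apply: (sup_upper_bound _ F0); split=> //; exists 0.
Qed.

Lemma psum_finite_support (a : T -> R) (L : list T) : NoDup L ->
  (forall x, 0 <= a x) -> (forall x, ~ In x L -> a x = 0) ->
  summable a /\ psum a = \sum_(x <- L) a x.
Proof.
move=> nL a0 aL.
have ubL : ubound (fin_psums a) (\sum_(x <- L) a x).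
  move=> _ [F [nF ->]].
  pose FL := List.filter (fun x => `[< In x L >]) F.
  have nFL : NoDup FL by exact: NoDup_filter.
  rewrite (@big_NoDup_sub _ _ a F FL) //; last first.
  - by move=> x Fx nx; apply: aL => Lx; apply: nx; apply/In_filter_asbool.
  - by move=> x /In_filter_asbool[].
  by apply: ler_big_NoDup_incl => // x /In_filter_asbool[].
have inL : fin_psums a (\sum_(x <- L) a x) by exists L.
split; first by exists (\sum_(x <- L) a x).
have neL : (fin_psums a !=set0)%classic by exists (\sum_(x <- L) a x).
apply/eqP; rewrite eq_le ge_sup //=; apply: (sup_upper_bound _ inL).
by split=> //; exists (\sum_(x <- L) a x).
Qed.

End FinitelySupportedSums.

Lemma finite_pred_enum (T : Type) (P : T -> Prop) : finite_pred P ->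
  exists L : list T, NoDup L /\ forall x, In x L <-> P x.
Proof.
move=> [l Pl]; have eqT : forall x y : T, {x = y} + {x <> y} by move=> x y; exact: pselect.
exists (List.filter (fun x => `[< P x >]) (nodup eqT l)).
split=> [|x]; first exact/NoDup_filter/NoDup_nodup.
by rewrite In_filter_asbool nodup_In; split=> [[]//|Px]; split; [apply: Pl|].
Qed.

Lemma not_finite_NoDup (T : Type) : ~ (exists l : list T, forall x, In x l) ->
  forall N, exists s : list T, NoDup s /\ length s = N.
Proof.
move=> infT; elim=> [|N [s [ns <-]]]; first by exists nil; split; [constructor|].
have [x sx] : exists x, ~ In x s.
  by apply: contra_notP infT => /forallNP sT; exists s => x; apply: contra_notP (sT x).
by exists (x :: s); split; [constructor|].
Qed.

Section Subgroups.
Variables (G : Type) (mul : G -> G -> G) (one : G) (inv : G -> G).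
Hypothesis groupG : is_group mul one inv.

Definition is_subgroup (H : G -> Prop) : Prop :=
  [/\ H one, (forall x y, H x -> H y -> H (mul x y)) & (forall x, H x -> H (inv x))].

Lemma gen_subgroupP (s : list G) : is_subgroup (gen_subgroup mul one inv s).
Proof. by split; [exact: gen_one | exact: gen_mul | exact: gen_inv]. Qed.

Lemma group_invK : involutive inv.
Proof.
by case: groupG => mulA mul1g mulg1 mulVg _ x; rewrite -[RHS]mul1g -(mulVg (inv x)) -mulA mulVg mulg1.
Qed.

Lemma subgroup_translate (H : G -> Prop) (y x : G) : is_subgroup H -> H y ->
  H (inv (mul (inv y) x)) <-> H x.
Proof.
case: groupG => mulA mul1g _ _ mulgV [_ Hmul Hinv] Hy; split=> [Hx|Hx].
  by have := Hmul _ _ Hy (Hinv _ Hx); rewrite group_invK mulA mulgV mul1g.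
by apply/Hinv/Hmul => //; apply: Hinv.
Qed.

End Subgroups.

Section ConjugateExponent.
Variable R : realType.

Lemma conj_exp_gt0 (p : R) : 1 < p -> 0 < conj_exp p.
Proof. by move=> p1; rewrite divr_gt0 ?subr_gt0 // (lt_trans ltr01). Qed.

Lemma invD_conj_exp (p : R) : p != 0 -> p^-1 + (conj_exp p)^-1 = 1.
Proof. by move=> p0; rewrite /conj_exp invf_div mulrBl mul1r addrC subrK divff. Qed.

End ConjugateExponent.

Lemma normc_ge0 (R : rcfType) (x : R[i]) : 0 <= Normc.normc x.
Proof. by case: x => a b; exact: sqrtr_ge0. Qed.

Section ApNorm.
Variables (R : realType) (G : Type) (mul : G -> G -> G) (inv : G -> G).
Local Notation C := R[i].

Lemma lp_norm_ge0 (r : R) (f : G -> C) : 0 <= lp_norm r f.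
Proof. exact: powR_ge0. Qed.

Lemma lp_norm_cst0 (r : R) : 0 < r ->
  in_lp r (fun _ : G => 0 : C) /\ lp_norm r (fun _ : G => 0 : C) = 0.
Proof.
move=> r0; have r0' : r != 0 by rewrite gt_eqF.
have [sm ps] := @psum_finite_support R G (fun _ => Normc.normc (0 : C) `^ r) nil
  (NoDup_nil _) (fun _ => powR_ge0 _ _) (fun _ _ => ltac:(by rewrite Normc.normc0 powR0)).
by rewrite /in_lp /lp_norm /= ps big_nil powR0 // invr_eq0.
Qed.

Lemma conv_at_cst0l (h : G -> C) (x : G) : conv_at mul inv (fun _ => 0) h x 0.
Proof.
move=> e e0; exists nil => F _ _.
by rewrite big1_In ?subrr ?Normc.normc0 // => y _; rewrite mul0r.
Qed.

Lemma Ap_norm_le_conv (p : R) (u f g : G -> C) : 1 < p ->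
  in_lp p f -> in_lp (conj_exp p) g ->
  (forall x, conv_at mul inv g (check inv f) x (u x)) ->
  Ap_norm mul inv p u <= lp_norm p f * lp_norm (conj_exp p) g.
Proof.
move=> p1 lpf lqg conv_u.
have [lp0 lp0n] := lp_norm_cst0 (lt_trans ltr01 p1).
have [lq0 _] := lp_norm_cst0 (conj_exp_gt0 p1).
pose fs (i : nat) : G -> C := if i is 0%N then f else fun _ => 0.
pose gs (i : nat) : G -> C := if i is 0%N then g else fun _ => 0.
pose cs (i : nat) (x : G) : C := if i is 0%N then u x else 0.
have nd0 : NoDup [:: 0%N] by constructor; [case | constructor].
have [sm ps] := @psum_finite_support R nat
  (fun i => lp_norm p (fs i) * lp_norm (conj_exp p) (gs i)) [:: 0%N] nd0
  (fun i => mulr_ge0 (lp_norm_ge0 _ _) (lp_norm_ge0 _ _))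
  (fun i => ltac:(by case: i => [[]|i _]; [left | rewrite lp0n mul0r])).
have lb : has_lbound [set r : R | exists fs gs : nat -> G -> C, Ap_rep mul inv p u fs gs /\
    r = psum (fun i => lp_norm p (fs i) * lp_norm (conj_exp p) (gs i))].
  by exists 0 => _ [? [? [[_ _ ? _] ->]]]; exact: psum_ge0.
apply: ge_inf lb _ _; exists fs, gs; split; last by rewrite ps big_seq1.
split=> [[|i]|[|i]|//|] //; exists cs; split=> [[|i] x|x e e0] //.
  exact: conv_at_cst0l.
by exists 1%N => -[|n] //= _; rewrite big_ord_recl big1 ?addr0 ?subrr ?Normc.normc0.
Qed.

End ApNorm.

Section SubgroupIndicator.
Variables (R : realType) (G : Type) (mul : G -> G -> G) (one : G) (inv : G -> G).
Hypothesis groupG : is_group mul one inv.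
Variables (H : G -> Prop) (L : list G).
Hypotheses (subH : is_subgroup mul one inv H) (nL : NoDup L) (LH : forall z, In z L <-> H z).
Local Notation C := R[i].
Local Notation n := (length L).

Definition indic (c : C) (z : G) : C := if `[< In z L >] then c else 0.

Lemma normc_indic (c : C) (z : G) :
  Normc.normc (indic c z) = if `[< In z L >] then Normc.normc c else 0.
Proof. by rewrite /indic; case: ifP; rewrite ?Normc.normc0. Qed.

Lemma lp_norm_indic (r : R) (c : C) : 0 < r ->
  in_lp r (indic c) /\ lp_norm r (indic c) = Normc.normc c * n%:R `^ r^-1.
Proof.
move=> r0; have r0' : r != 0 by rewrite gt_eqF.
have [sm ps] := @psum_finite_support R G (fun z => Normc.normc (indic c z) `^ r) L nL
  (fun _ => powR_ge0 _ _)
  (fun z Lz => ltac:(by rewrite /= normc_indic; case: asboolP => //; rewrite powR0)).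
split=> //; rewrite /lp_norm ps (@big_const_In _ _ _ (Normc.normc c `^ r)); last first.
  by move=> z Lz; rewrite normc_indic; case: asboolP.
rewrite -(mulr_natr (_ `^ r)) powRM ?powR_ge0 ?ler0n // -powRrM divff // powRr1 //.
exact: normc_ge0.
Qed.

Lemma l1_norm_indic (c : C) : in_l1 (indic c) /\ l1_norm (indic c) = Normc.normc c *+ n.
Proof.
have [sm ps] := @psum_finite_support R G (fun z => Normc.normc (indic c z)) L nL
  (fun _ => normc_ge0 _)
  (fun z Lz => ltac:(by rewrite /= normc_indic; case: asboolP)).
split=> //; rewrite /l1_norm ps; apply: big_const_In => z Lz.
by rewrite normc_indic; case: asboolP.
Qed.

Lemma conv_indic (c d : C) (x : G) :
  conv_at mul inv (indic c) (check inv (indic d)) x (c *+ n * indic d x).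
Proof.
move=> e e0; exists L => F nF LF.
rewrite (@big_NoDup_sub _ _ _ F L) //; last first.
  by move=> y _ Ly; rewrite /indic; case: asboolP => // _; rewrite mul0r.
rewrite (@big_const_In _ _ _ (c * indic d x)) ?mulrnAl ?subrr ?Normc.normc0 // => y Ly.
have Hy : H y by apply/LH.
rewrite /check /indic; case: asboolP => // _.
have Hyx : In (inv (mul (inv y) x)) L <-> In x L.
  by split=> /LH/(subgroup_translate groupG _ subH Hy)/LH.
by rewrite (asbool_equiv_eq Hyx).
Qed.

Lemma Ap_norm_indic1 (p : R) : 1 < p -> Ap_norm mul inv p (indic 1) <= 1.
Proof.
move=> p1; have p0 : 0 < p by exact: lt_trans p1.
have n0 : n%:R != 0 :> R by case: subH => /LH; rewrite pnatr_eq0; case: (L).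
have nC0 : n%:R != 0 :> C by rewrite pnatr_eq0 -(pnatr_eq0 R).
have [lpf lpfE] := lp_norm_indic 1 p0.
have [lqg lqgE] := lp_norm_indic n%:R^-1 (conj_exp_gt0 p1).
apply: le_trans (Ap_norm_le_conv p1 lpf lqg _) _ => [x|].
  have invn : n%:R^-1 *+ n = 1 :> C by rewrite -[LHS]mulr_natr mulVf.
  by have := conv_indic (n%:R^-1) 1 x; rewrite invn mul1r.
rewrite lpfE lqgE Normc.normc1 Normc.normcV normcMn Normc.normc1 mul1r mulrCA -powRD; last first.
  by rewrite n0 implybT.
by rewrite invD_conj_exp ?gt_eqF // powRr1 ?ler0n // mulVf.
Qed.

Lemma length_le_Ap_l1_bound (p M : R) : 1 < p ->
  (forall f : G -> C, in_l1 f -> Ap_norm mul inv p f <= 1 -> l1_norm f <= M) ->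
  n%:R <= M.
Proof.
move=> p1 HM; have [l1u l1n] := l1_norm_indic 1.
by have := HM _ l1u (Ap_norm_indic1 p1); rewrite l1n Normc.normc1.
Qed.

End SubgroupIndicator.

Theorem corollary3p8 (R : realType) (G : Type) (mul : G -> G -> G) (one : G)
    (inv : G -> G) (p : R) :
  is_group mul one inv -> locally_finite mul one inv -> 1 < p ->
  (exists M : R, forall f : G -> R[i],
      in_l1 f -> Ap_norm mul inv p f <= 1 -> l1_norm f <= M) ->
  exists l : list G, forall x : G, List.In x l.
Proof.
move=> groupG lfG p1 [M HM]; apply: contrapT => infG.
have [s [ns ls]] := not_finite_NoDup infG (Num.truncn M).+1.
have [L [nL LH]] := finite_pred_enum (lfG s).
have sL : (length s <= length L)%N.
  by apply/ssrnat.leP/NoDup_incl_length => // z zs; apply/LH/gen_base.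
have := length_le_Ap_l1_bound groupG (gen_subgroupP mul one inv s) nL LH p1 HM.
apply/negP; rewrite -ltNge (lt_le_trans (truncnS_gt M)) // ler_nat -ls //.
Qed.
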